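(* Let $K$ be a Kripke structure over $\mathbf{AP}$, $D(K)$ its deadlock extension, and $s$ a state of $K$. Then for every $\mathsf{CTL}^*_\infty$ state formula $\varphi$: $s\models\varphi$ in $K$ iff $s\models\mathbf{D}(\varphi)$ in $D(K)$; and for every $\mathsf{CTL}^*_\delta$ state formula $\varphi$: $s\models\varphi$ in $D(K)$ iff $s\models\mathbf{E}(\varphi)$ in $K$.
   Context: A Kripke structure is $K=(S,L,\to)$ with $L:S\to\mathcal{P}(\mathbf{AP})$ and $\to\subseteq S\times S$ (not necessarily total). Paths are finite sequences $s_0,\dots,s_n$ or infinite sequences $s_0,s_1,\dots$ with $s_k\to s_{k+1}$; a path is maximal if infinite or if its last state has no successor. The deadlock extension $D(K)$ adds a fresh state $s_\delta$ labelled $\{\delta\}$, where $\delta\notin\mathbf{AP}$ is a fresh atomic proposition, a transition $s_\delta\to s_\delta$, and a transition $u\to s_\delta$ from every state $u$ of $K$ without successors. $\mathsf{CTL}^*_\infty$: state formulas $\varphi::=p\mid\neg\varphi\mid\bigwedge\Phi'\mid\exists\psi$ and path formulas $\psi::=\varphi\mid\neg\psi\mid\bigwedge\Psi'\mid\psi\,\mathsf{U}\,\psi\mid\infty$ ($p\in\mathbf{AP}$, $\Phi',\Psi'$ arbitrary sets). $\mathsf{CTL}^*_\delta$ is the same but without $\infty$ and with atomic propositions from $\mathbf{AP}\cup\{\delta\}$. Validity (state formulas at states, path formulas on maximal paths): $s\models p$ iff $p\in L(s)$; negation and conjunction as usual; $s\models\exists\psi$ iff some maximal path $\pi$ from $s$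 has $\pi\models\psi$; $\pi\models\varphi$ iff its first state satisfies $\varphi$; $\pi\models\psi\,\mathsf{U}\,\psi'$ iff some suffix $\pi'$ of $\pi$ has $\pi'\models\psi'$ and $\pi''\models\psi$ for every suffix $\pi''$ of $\pi$ of which $\pi'$ is a proper suffix; $\pi\models\infty$ iff $\pi$ is infinite. Abbreviations: $\top=\bigwedge\emptyset$, $\psi\vee\psi'=\neg(\neg\psi\wedge\neg\psi')$, $\mathsf{F}\psi=\top\,\mathsf{U}\,\psi$, $\mathsf{G}\psi=\neg\mathsf{F}\neg\psi$. The mapping $\mathbf{D}$ from $\mathsf{CTL}^*_\infty$ to $\mathsf{CTL}^*_\delta$ formulas: $\mathbf{D}(p)=p$; $\mathbf{D}(\neg\varphi)=\neg\delta\wedge\neg\mathbf{D}(\varphi)$; $\mathbf{D}(\bigwedge_{i}\varphi_i)=\bigwedge_i\mathbf{D}(\varphi_i)$; $\mathbf{D}(\exists\psi)=\exists\mathbf{D}(\psi)$; $\mathbf{D}(\neg\psi)=\neg\delta\wedge\neg\mathbf{D}(\psi)$; $\mathbf{D}(\bigwedge_i\psi_i)=\bigwedge_i\mathbf{D}(\psi_i)$; $\mathbf{D}(\psi\,\mathsf{U}\,\psi')=\mathbf{D}(\psi)\,\mathsf{U}\,\mathbf{D}(\psi')$; $\mathbf{D}(\infty)=\neg\mathsf{F}\delta$ (state formulas used as path formulas are translated by the state clauses). The mapping $\mathbf{E}$ from $\mathsf{CTL}^*_\delta$ to $\mathsf{CTL}^*_\infty$ formulas: $\mathbf{E}(p)=p$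 for $p\in\mathbf{AP}$; $\mathbf{E}(\delta)=\neg\top$; $\mathbf{E}$ commutes with $\neg$, $\bigwedge$ and $\exists$; and $\mathbf{E}(\psi\,\mathsf{U}\,\psi')=X\vee(\mathbf{E}(\psi)\,\mathsf{U}\,\mathbf{E}(\psi'))$, where $X=\neg\infty\wedge\mathsf{G}\,\mathbf{E}(\psi)$ if $s_\delta\models\exists\psi'$ (in a deadlock extension; this depends only on $\psi'$ since the only maximal path from $s_\delta$ is $s_\delta,s_\delta,\dots$), and $X=\mathbf{E}(\psi)\,\mathsf{U}\,\neg\top$ otherwise. *)

From Stdlib Require Import Arith ClassicalEpsilon.
Set Implicit Arguments.

Record kripke (AP : Type) := Kripke {
  St : Type;
  Lab : St -> AP -> Prop;
  Rel : St -> St -> Prop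
}.
Arguments St {AP} k.
Arguments Lab {AP} k _ _.
Arguments Rel {AP} k _ _.

(* A (finite or infinite) sequence of states: [plen = None] means infinite,
   [plen = Some n] means the finite sequence s_0, ..., s_n. *)
Record path (S : Type) := Path { pst : nat -> S; plen : option nat }.
Arguments Path {S} _ _.
Arguments pst {S} _ _.
Arguments plen {S} _.

Definition in_dom {S} (pi : path S) (k : nat) : Prop :=
  match plen pi with None => True | Some n => k <= n end.

Definition is_path {AP} (K : kripke AP) (pi : path (St K)) : Prop :=
  forall k, in_dom pi (S k) -> Rel K (pst pi k) (pst pi (S k)).

Definition is_maximal {AP} (K : kripke AP) (pi : path (St K)) : Prop :=
  match plen pi with
  | None => True
  | Some n => forall t, ~ Rel K (pst pi n) t
  end.

(* the suffix of pi starting at index k (meaningful for k in the domain) *)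
Definition suffix {S} (pi : path S) (k : nat) : path S :=
  Path (fun i => pst pi (k + i)) (option_map (fun n => n - k) (plen pi)).

Inductive sform (A : Type) : Type :=
| SAtom : A -> sform A
| SNeg : sform A -> sform A
| SAnd : forall I : Type, (I -> sform A) -> sform A
| SEx : pform A -> sform A
with pform (A : Type) : Type :=
| PState : sform A -> pform A
| PNeg : pform A -> pform A
| PAnd : forall I : Type, (I -> pform A) -> pform A
| PUntil : pform A -> pform A -> pform A
| PInf : pform A.
Arguments SAtom {A} _. Arguments SNeg {A} _. Arguments SAnd {A} {I} _.
Arguments SEx {A} _. Arguments PState {A} _. Arguments PNeg {A} _.
Arguments PAnd {A} {I} _. Arguments PUntil {A} _ _. Arguments PInf {A}.

Inductive dsform (A : Type) : Type :=
| DSAtom : A -> dsform A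
| DSNeg : dsform A -> dsform A
| DSAnd : forall I : Type, (I -> dsform A) -> dsform A
| DSEx : dpform A -> dsform A
with dpform (A : Type) : Type :=
| DPState : dsform A -> dpform A
| DPNeg : dpform A -> dpform A
| DPAnd : forall I : Type, (I -> dpform A) -> dpform A
| DPUntil : dpform A -> dpform A -> dpform A.
Arguments DSAtom {A} _. Arguments DSNeg {A} _. Arguments DSAnd {A} {I} _.
Arguments DSEx {A} _. Arguments DPState {A} _. Arguments DPNeg {A} _.
Arguments DPAnd {A} {I} _. Arguments DPUntil {A} _ _.

Section Sem.
Context {AP : Type} (K : kripke AP).

Fixpoint sat_s (phi : sform AP) (s : St K) {struct phi} : Prop :=
  match phi with
  | SAtom p => Lab K s p
  | SNeg phi' => ~ sat_s phi' s
  | SAnd f => forall i, sat_s (f i) s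
  | SEx psi => exists pi : path (St K),
      is_path K pi /\ is_maximal K pi /\ pst pi 0 = s /\ sat_p psi pi
  end
with sat_p (psi : pform AP) (pi : path (St K)) {struct psi} : Prop :=
  match psi with
  | PState phi => sat_s phi (pst pi 0)
  | PNeg psi' => ~ sat_p psi' pi
  | PAnd f => forall i, sat_p (f i) pi
  | PUntil a b => exists k, in_dom pi k /\ sat_p b (suffix pi k) /\
                    forall j, j < k -> sat_p a (suffix pi j)
  | PInf => plen pi = None
  end.

Fixpoint dsat_s (phi : dsform AP) (s : St K) {struct phi} : Prop :=
  match phi with
  | DSAtom p => Lab K s p
  | DSNeg phi' => ~ dsat_s phi' s
  | DSAnd f => forall i, dsat_s (f i) s
  | DSEx psi => exists pi : path (St K),
      is_path K pi /\ is_maximal K pi /\ pst pi 0 = s /\ dsat_p psi pi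
  end
with dsat_p (psi : dpform AP) (pi : path (St K)) {struct psi} : Prop :=
  match psi with
  | DPState phi => dsat_s phi (pst pi 0)
  | DPNeg psi' => ~ dsat_p psi' pi
  | DPAnd f => forall i, dsat_p (f i) pi
  | DPUntil a b => exists k, in_dom pi k /\ dsat_p b (suffix pi k) /\
                    forall j, j < k -> dsat_p a (suffix pi j)
  end.
End Sem.

(* ---------- Deadlock extension D(K): None is s_delta, None label is delta ---------- *)
Definition DK {AP : Type} (K : kripke AP) : kripke (option AP) :=
  {| St := option (St K);
     Lab := fun s p => match s, p with
                       | Some s', Some q => Lab K s' q
                       | None, None => True
                       | _, _ => False
                       end;
     Rel := fun u v => match u, v with
                       | Some u', Some v' => Rel K u' v'
                       | Some u', None => forall t, ~ Rel K u' t
                       | None, None => True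
                       | None, Some _ => False
                       end |}.

Definition sand2 {A} (a b : sform A) : sform A := @SAnd A bool (fun x => if x then a else b).
Definition pand2 {A} (a b : pform A) : pform A := @PAnd A bool (fun x => if x then a else b).
Definition ptop {A} : pform A := @PAnd A Empty_set (fun e => match e with end).
Definition stop {A} : sform A := @SAnd A Empty_set (fun e => match e with end).
Definition por2 {A} (a b : pform A) : pform A := PNeg (pand2 (PNeg a) (PNeg b)).
Definition pF {A} (a : pform A) : pform A := PUntil ptop a.
Definition pG {A} (a : pform A) : pform A := PNeg (pF (PNeg a)).

Definition dsand2 {A} (a b : dsform A) : dsform A := @DSAnd A bool (fun x => if x then a else b).
Definition dpand2 {A} (a b : dpform A) : dpform A := @DPAnd A bool (fun x => if x then a else b).
Definition dptop {A} : dpform A := @DPAnd A Empty_set (fun e => match e with end).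
Definition dpF {A} (a : dpform A) : dpform A := DPUntil dptop a.

Definition dlt {AP} : dsform (option AP) := DSAtom None.

Fixpoint Dtr_s {AP} (phi : sform AP) : dsform (option AP) :=
  match phi with
  | SAtom p => DSAtom (Some p)
  | SNeg phi' => dsand2 (DSNeg dlt) (DSNeg (Dtr_s phi'))
  | SAnd f => DSAnd (fun i => Dtr_s (f i))
  | SEx psi => DSEx (Dtr_p psi)
  end
with Dtr_p {AP} (psi : pform AP) : dpform (option AP) :=
  match psi with
  | PState phi => DPState (Dtr_s phi)
  | PNeg psi' => dpand2 (DPNeg (DPState dlt)) (DPNeg (Dtr_p psi'))
  | PAnd f => DPAnd (fun i => Dtr_p (f i))
  | PUntil a b => DPUntil (Dtr_p a) (Dtr_p b)
  | PInf => DPNeg (dpF (DPState dlt))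
  end.

(* ---------- The translation E : CTL*_delta -> CTL*_infty (relative to K) ----------
   The case distinction "s_delta |= exists psi'" is evaluated in D(K); it is
   decided classically. *)
Fixpoint Etr_s {AP} (K : kripke AP) (phi : dsform (option AP)) : sform AP :=
  match phi with
  | DSAtom (Some p) => SAtom p
  | DSAtom None => SNeg stop
  | DSNeg phi' => SNeg (Etr_s K phi')
  | DSAnd f => SAnd (fun i => Etr_s K (f i))
  | DSEx psi => SEx (Etr_p K psi)
  end
with Etr_p {AP} (K : kripke AP) (psi : dpform (option AP)) : pform AP :=
  match psi with
  | DPState phi => PState (Etr_s K phi)
  | DPNeg psi' => PNeg (Etr_p K psi')
  | DPAnd f => PAnd (fun i => Etr_p K (f i))
  | DPUntil a b =>
      let X := if excluded_middle_informative
                    (dsat_s (DK K) (DSEx b) (None : St (DK K)))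
               then pand2 (PNeg PInf) (pG (Etr_p K a))
               else PUntil (Etr_p K a) (PNeg ptop) in
      por2 X (PUntil (Etr_p K a) (Etr_p K b))
  end.

(* A maximal path of K is lifted to D(K) by padding it with s_delta after its
   last state; every maximal path of D(K) starting in K arises this way, and the
   only maximal path from s_delta is constantly s_delta.  An until-witness on a
   lifted path therefore either lies on the original path or lies in the
   deadlock tail, where every suffix is the constant s_delta path.  Both
   translations are then correct by simultaneous induction on state and path
   formulas: D guards negations with ~delta so that they fail in the tail, and
   the disjunct X of E accounts exactly for witnesses in the tail. *)
From Stdlib Require Import Arith Lia Classical ClassicalEpsilon FunctionalExtensionality Wf_nat.

Section Lift.
Context {T : Type}.

Definition lift_path (pi : path T) : path (option T) :=
  Path (fun k => match plen pi with
                 | None => Some (pst pi k)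
                 | Some n => if k <=? n then Some (pst pi k) else None
                 end) None.

Definition delta_path : path (option T) := Path (fun _ => None) None.

Lemma in_dom0 (pi : path T) : in_dom pi 0.
Proof. unfold in_dom; destruct (plen pi); auto; lia. Qed.

Lemma in_dom_le (pi : path T) j k : j <= k -> in_dom pi k -> in_dom pi j.
Proof. unfold in_dom; destruct (plen pi); auto; lia. Qed.

Lemma suffix_lift_path (pi : path T) k :
  in_dom pi k -> suffix (lift_path pi) k = lift_path (suffix pi k).
Proof.
  unfold in_dom, suffix, lift_path; simpl; intro Hk.
  destruct (plen pi) as [n|]; simpl; f_equal.
  apply functional_extensionality; intro i.
  destruct (Nat.leb_spec (k + i) n), (Nat.leb_spec i (n - k)); reflexivity || lia.
Qed.

Lemma suffix_lift_path_out (pi : path T) k :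
  ~ in_dom pi k -> suffix (lift_path pi) k = delta_path.
Proof.
  unfold in_dom, suffix, lift_path, delta_path; simpl; intro Hk.
  destruct (plen pi) as [n|]; [|tauto]; simpl; f_equal.
  apply functional_extensionality; intro i.
  destruct (Nat.leb_spec (k + i) n); reflexivity || lia.
Qed.

Lemma until_lift_path (A B : path (option T) -> Prop) (pi : path T) :
  (exists k, in_dom (lift_path pi) k /\ B (suffix (lift_path pi) k) /\
             forall j, j < k -> A (suffix (lift_path pi) j)) <->
  (exists k, in_dom pi k /\ B (lift_path (suffix pi k)) /\
             forall j, j < k -> A (lift_path (suffix pi j))) \/
  (exists n, plen pi = Some n /\ B delta_path /\
             forall j, j <= n -> A (lift_path (suffix pi j))).
Proof.
  split.
  - intros [k [_ [Hb Ha]]].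
    destruct (classic (in_dom pi k)) as [Hk|Hk].
    + left; exists k; rewrite <- suffix_lift_path by exact Hk.
      split; [exact Hk|split; [exact Hb|]].
      intros j Hj; rewrite <- suffix_lift_path by (eapply in_dom_le; [|exact Hk]; lia).
      auto.
    + right; rewrite suffix_lift_path_out in Hb by exact Hk.
      unfold in_dom in Hk; destruct (plen pi) as [n|] eqn:E; [|tauto].
      exists n; split; [reflexivity|split; [exact Hb|]].
      intros j Hj; rewrite <- suffix_lift_path by (unfold in_dom; rewrite E; exact Hj).
      apply Ha; lia.
  - intros [[k [Hk [Hb Ha]]]|[n [E [Hb Ha]]]].
    + exists k; split; [exact I|]; rewrite suffix_lift_path by exact Hk.
      split; [exact Hb|].
      intros j Hj; rewrite suffix_lift_path by (eapply in_dom_le; [|exact Hk]; lia).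
      auto.
    + exists (S n); split; [exact I|].
      rewrite suffix_lift_path_out by (unfold in_dom; rewrite E; lia).
      split; [exact Hb|].
      intros j Hj; rewrite suffix_lift_path by (unfold in_dom; rewrite E; lia).
      apply Ha; lia.
Qed.

End Lift.

Section DeadlockExtension.
Context {AP : Type} (K : kripke AP).

Lemma lift_path_is_path (pi : path (St K)) :
  is_path K pi -> is_maximal K pi -> is_path (DK K) (lift_path pi).
Proof.
  unfold is_path, is_maximal, in_dom, lift_path; simpl; intros Hp Hm k _.
  destruct (plen pi) as [n|]; simpl; [|apply Hp; exact I].
  change (match n with 0 => false | S m => k <=? m end) with (S k <=? n).
  destruct (Nat.leb_spec (S k) n), (Nat.leb_spec k n); try lia.
  - apply Hp; exact H.
  - replace k with n by lia; exact Hm.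
Qed.

(* Stated at type [St (DK K)] so that it rewrites inside satisfaction goals. *)
Lemma DK_lift_path_start (pi : path (St K)) :
  pst (lift_path pi : path (St (DK K))) 0 = Some (pst pi 0).
Proof. unfold lift_path; simpl; destruct (plen pi); reflexivity. Qed.

Lemma DK_maximal_infinite {rho : path (St (DK K))} :
  is_maximal (DK K) rho -> plen rho = None.
Proof.
  unfold is_maximal; destruct (plen rho) as [n|]; [|auto]; intro Hm; exfalso.
  destruct (pst rho n) as [u|].
  - destruct (classic (exists v, Rel K u v)) as [[v Hv]|Hdead].
    + exact (Hm (Some v) Hv).
    + apply (Hm None); intros v Hv; eauto.
  - exact (Hm None I).
Qed.

Lemma DK_path_step {rho : path (St (DK K))} k :
  is_path (DK K) rho -> is_maximal (DK K) rho ->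
  Rel (DK K) (pst rho k) (pst rho (S k)).
Proof.
  intros Hp Hm; apply Hp; unfold in_dom; rewrite (DK_maximal_infinite Hm); exact I.
Qed.

Lemma DK_path_stays_delta {rho : path (St (DK K))} {k j} :
  is_path (DK K) rho -> is_maximal (DK K) rho ->
  pst rho k = None -> k <= j -> pst rho j = None.
Proof.
  intros Hp Hm Hk; induction 1 as [|j _ IH]; [exact Hk|].
  pose proof (DK_path_step j Hp Hm) as Hstep; rewrite IH in Hstep.
  destruct (pst rho (S j)); [contradiction|reflexivity].
Qed.

Lemma DK_maximal_from_delta {rho : path (St (DK K))} :
  is_path (DK K) rho -> is_maximal (DK K) rho -> pst rho 0 = None ->
  rho = delta_path.
Proof.
  intros Hp Hm H0; pose proof (DK_maximal_infinite Hm) as E.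
  destruct rho as [f l]; simpl in E; subst l; unfold delta_path; f_equal.
  apply functional_extensionality; intro j.
  exact (DK_path_stays_delta Hp Hm H0 (Nat.le_0_l j)).
Qed.

Lemma DK_maximal_from_state {rho : path (St (DK K))} {t} :
  is_path (DK K) rho -> is_maximal (DK K) rho -> pst rho 0 = Some t ->
  exists pi, is_path K pi /\ is_maximal K pi /\ pst pi 0 = t /\ rho = lift_path pi.
Proof.
  intros Hp Hm H0; pose proof (DK_maximal_infinite Hm) as E.
  set (g := fun k => match pst rho k with Some x => x | None => t end).
  assert (Hstep := fun k => DK_path_step k Hp Hm).
  destruct (classic (exists k, pst rho k = None)) as [[k Hk]|Hnever].
  - assert (exists n u, pst rho n = Some u /\ pst rho (S n) = None)
      as [n [u [Hn HSn]]].
    { induction k as [|k IH]; [congruence|].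
      destruct (pst rho k) eqn:Ek; eauto. }
    assert (Hlive : forall j, j <= n -> pst rho j = Some (g j)).
    { intros j Hj; unfold g; destruct (pst rho j) eqn:Ej; [reflexivity|].
      rewrite (DK_path_stays_delta Hp Hm Ej Hj) in Hn; discriminate. }
    exists (Path g (Some n)); split; [|split; [|split]].
    + intros j Hj; unfold in_dom in Hj; simpl in *.
      specialize (Hstep j); rewrite (Hlive j ltac:(lia)), (Hlive (S j) Hj) in Hstep.
      exact Hstep.
    + intros v Hv; specialize (Hstep n); rewrite Hn, HSn in Hstep; simpl in Hv.
      unfold g in Hv; rewrite Hn in Hv; exact (Hstep v Hv).
    + simpl; pose proof (Hlive 0 (Nat.le_0_l n)); congruence.
    + destruct rho as [f l]; simpl in *; subst l; unfold lift_path; simpl; f_equal.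
      apply functional_extensionality; intro j.
      destruct (Nat.leb_spec j n); [apply Hlive; lia|].
      apply (DK_path_stays_delta Hp Hm HSn); lia.
  - assert (Hlive : forall j, pst rho j = Some (g j)).
    { intro j; unfold g; destruct (pst rho j) eqn:Ej; eauto; exfalso; eauto. }
    exists (Path g None); split; [|split; [|split]].
    + intros j _; specialize (Hstep j); rewrite !Hlive in Hstep; exact Hstep.
    + exact I.
    + simpl; pose proof (Hlive 0); congruence.
    + destruct rho as [f l]; simpl in *; subst l; unfold lift_path; simpl; f_equal.
      apply functional_extensionality; exact Hlive.
Qed.

(* Follow a chosen successor as long as one exists; stop at the first deadlock. *)
Lemma maximal_path_exists (t : St K) :
  exists pi, is_path K pi /\ is_maximal K pi /\ pst pi 0 = t.
Proof.
  set (next := fun x => match excluded_middle_informative (exists u, Rel K x u) with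
                        | left h => proj1_sig (constructive_indefinite_description _ h)
                        | right _ => x
                        end).
  assert (Hnext : forall x, (exists u, Rel K x u) -> Rel K x (next x)).
  { intros x h; unfold next; destruct (excluded_middle_informative _) as [h'|];
      [exact (proj2_sig (constructive_indefinite_description _ h'))|contradiction]. }
  set (f := fun k => Nat.iter k next t).
  destruct (classic (forall k, exists u, Rel K (f k) u)) as [Hlive|Hdead].
  - exists (Path f None); repeat split; intros k _; apply Hnext, Hlive.
  - apply not_all_ex_not in Hdead.
    destruct (dec_inh_nat_subset_has_unique_least_element
                (fun k => ~ exists u, Rel K (f k) u) (fun k => classic _) Hdead)
      as [n [[Hn Hleast] _]].
    exists (Path f (Some n)); split; [|split; [|reflexivity]].
    + intros k Hk; unfold in_dom in Hk; simpl in Hk; apply Hnext.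
      apply NNPP; intro Hk'; specialize (Hleast k Hk'); lia.
    + intros v Hv; apply Hn; eauto.
Qed.

Lemma DK_exists_from_state (psi : dpform (option AP)) t :
  dsat_s (DK K) (DSEx psi) (Some t) <->
  exists pi, is_path K pi /\ is_maximal K pi /\ pst pi 0 = t /\
             dsat_p (DK K) psi (lift_path pi).
Proof.
  split.
  - intros [rho [Hp [Hm [H0 Hpsi]]]].
    destruct (DK_maximal_from_state Hp Hm H0) as [pi [Hp' [Hm' [H0' ->]]]].
    exists pi; auto.
  - intros [pi [Hp [Hm [H0 Hpsi]]]].
    exists (lift_path pi); split; [apply lift_path_is_path; auto|].
    split; [exact I|split; [rewrite DK_lift_path_start, H0; reflexivity|exact Hpsi]].
Qed.

Lemma DK_exists_from_delta (psi : dpform (option AP)) :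
  dsat_s (DK K) (DSEx psi) None <-> dsat_p (DK K) psi delta_path.
Proof.
  split.
  - intros [rho [Hp [Hm [H0 Hpsi]]]].
    rewrite <- (DK_maximal_from_delta Hp Hm H0); exact Hpsi.
  - intro Hpsi; exists delta_path; repeat split; auto.
Qed.

End DeadlockExtension.

Scheme sform_mut := Induction for sform Sort Prop
  with pform_mut := Induction for pform Sort Prop.

Scheme dsform_mut := Induction for dsform Sort Prop
  with dpform_mut := Induction for dpform Sort Prop.

Section TranslationD.
Context {AP : Type} (K : kripke AP).

(* The second conjunct strengthens the induction: at s_delta, a translated
   formula holds only if the original formula is valid.  It is needed for
   until-witnesses lying in the deadlock tail. *)
Definition Dtr_s_correct (phi : sform AP) : Prop :=
  (forall t, sat_s K phi t <-> dsat_s (DK K) (Dtr_s phi) (Some t)) /\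
  (dsat_s (DK K) (Dtr_s phi) None -> forall t, sat_s K phi t).

Definition Dtr_p_correct (psi : pform AP) : Prop :=
  (forall pi, sat_p K psi pi <-> dsat_p (DK K) (Dtr_p psi) (lift_path pi)) /\
  (dsat_p (DK K) (Dtr_p psi) delta_path -> forall pi, sat_p K psi pi).

Lemma Dtr_ex_correct psi : Dtr_p_correct psi -> Dtr_s_correct (SEx psi).
Proof.
  intros [Hlift Hdelta]; split.
  - intro t; cbn [Dtr_s sat_s]; rewrite DK_exists_from_state.
    setoid_rewrite Hlift; reflexivity.
  - intros H t; apply DK_exists_from_delta in H.
    destruct (maximal_path_exists K t) as [pi [Hp [Hm H0]]].
    exists pi; auto.
Qed.

Lemma Dtr_until_correct a b :
  Dtr_p_correct a -> Dtr_p_correct b -> Dtr_p_correct (PUntil a b).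
Proof.
  intros [Ha _] [Hb Hb_delta]; split.
  - intro pi; simpl; rewrite until_lift_path.
    setoid_rewrite <- Ha; setoid_rewrite <- Hb; split; [now left|].
    intros [H|[n [_ [Hdelta _]]]]; [exact H|].
    exists 0; split; [apply in_dom0|split; [now apply Hb_delta|intros; lia]].
  - intros [k [_ [Hdelta _]]] pi.
    exists 0; split; [apply in_dom0|split; [now apply Hb_delta|intros; lia]].
Qed.

Lemma Dtr_inf_correct : Dtr_p_correct PInf.
Proof.
  split.
  - intro pi; simpl.
    rewrite (until_lift_path (dsat_p (DK K) dptop) (dsat_p (DK K) (DPState dlt))).
    cbn [dsat_p dsat_s dlt]; split.
    + intros E [[k [_ [Hdelta _]]]|[n [E' _]]]; [|congruence].
      rewrite DK_lift_path_start in Hdelta; exact Hdelta.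
    + intro H; destruct (plen pi) as [n|] eqn:E; [|reflexivity].
      exfalso; apply H; right; exists n; split; [reflexivity|split; [exact I|]].
      intros j _ [].
  - intro H; exfalso; apply H.
    exists 0; repeat split; intros; lia.
Qed.

Lemma Dtr_correct (phi : sform AP) : Dtr_s_correct phi.
Proof.
  apply (sform_mut AP Dtr_s_correct Dtr_p_correct).
  - intro p; split; [reflexivity|contradiction].
  - intros phi' [IH _]; split.
    + intro t; simpl; rewrite IH; split; [intros H [|]; simpl; tauto|exact (fun H => H false)].
    + intro H; exfalso; exact (H true I).
  - intros I f IH; split.
    + intro t; split; intros H i; apply (proj1 (IH i)); auto.
    + intros H t i; apply (proj2 (IH i)); auto.
  - exact Dtr_ex_correct.
  - intros phi' [IH1 IH2]; split.
    + intro pi; cbn [sat_p dsat_p Dtr_p]; rewrite DK_lift_path_start; apply IH1.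
    + intros H pi; exact (IH2 H _).
  - intros psi [IH _]; split.
    + intro pi; cbn [sat_p dsat_p Dtr_p dpand2]; rewrite IH; split.
      * intros H [|]; cbn [dsat_p dsat_s dlt]; [rewrite DK_lift_path_start; tauto|exact H].
      * exact (fun H => H false).
    + intro H; exfalso; exact (H true I).
  - intros I f IH; split.
    + intro pi; split; intros H i; apply (proj1 (IH i)); auto.
    + intros H pi i; apply (proj2 (IH i)); auto.
  - intros a IHa b IHb; exact (Dtr_until_correct a b IHa IHb).
  - exact Dtr_inf_correct.
Qed.

End TranslationD.

Section TranslationE.
Context {AP : Type} (K : kripke AP).

Lemma sat_por2 a b pi : sat_p K (por2 a b) pi <-> sat_p K a pi \/ sat_p K b pi.
Proof.
  simpl; split.
  - intro H; apply NNPP; intro Hn; apply H; intros [|]; simpl; tauto.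
  - intros H Hn; pose proof (Hn true); pose proof (Hn false); simpl in *; tauto.
Qed.

Lemma sat_pand2 a b pi : sat_p K (pand2 a b) pi <-> sat_p K a pi /\ sat_p K b pi.
Proof.
  simpl; split; [intro H; exact (conj (H true) (H false))|intros [Ha Hb] [|]; auto].
Qed.

Lemma sat_pG a pi : sat_p K (pG a) pi <-> forall k, in_dom pi k -> sat_p K a (suffix pi k).
Proof.
  simpl; split.
  - intros H k Hk; apply NNPP; intro Hn; apply H; exists k; repeat split; auto.
    intros j _ [].
  - intros H [k [Hk [Hn _]]]; exact (Hn (H k Hk)).
Qed.

Definition Etr_s_correct (phi : dsform (option AP)) : Prop :=
  forall t, dsat_s (DK K) phi (Some t) <-> sat_s K (Etr_s K phi) t.

Definition Etr_p_correct (psi : dpform (option AP)) : Prop :=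
  forall pi, dsat_p (DK K) psi (lift_path pi) <-> sat_p K (Etr_p K psi) pi.

Lemma Etr_until_correct a b :
  Etr_p_correct a -> Etr_p_correct b -> Etr_p_correct (DPUntil a b).
Proof.
  unfold Etr_p_correct; intros Ha Hb pi; cbn [dsat_p Etr_p].
  rewrite sat_por2, or_comm, (until_lift_path (dsat_p (DK K) a) (dsat_p (DK K) b)).
  apply Morphisms_Prop.or_iff_morphism.
  - simpl; setoid_rewrite Ha; setoid_rewrite Hb; reflexivity.
  - destruct (excluded_middle_informative _) as [Hdelta|Hno_delta].
    + apply DK_exists_from_delta in Hdelta.
      rewrite sat_pand2, sat_pG; simpl; setoid_rewrite <- Ha; split.
      * intros [n [E [_ HA]]]; rewrite E; split; [discriminate|].
        intros k Hk; apply HA; unfold in_dom in Hk; rewrite E in Hk; exact Hk.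
      * intros [Hfin HA]; destruct (plen pi) as [n|] eqn:E; [|contradiction].
        exists n; split; [reflexivity|split; [exact Hdelta|]].
        intros j Hj; apply HA; unfold in_dom; rewrite E; exact Hj.
    + split; [intros [n [_ [H _]]]; exfalso; apply Hno_delta, DK_exists_from_delta, H|].
      intros [k [_ [Htop _]]]; exfalso; apply Htop; intros [].
Qed.

Lemma Etr_correct (phi : dsform (option AP)) : Etr_s_correct phi.
Proof.
  apply (dsform_mut (option AP) Etr_s_correct Etr_p_correct).
  - intros [p|] t; simpl; [reflexivity|].
    split; [contradiction|intro H; apply H; intros []].
  - intros phi' IH t; exact (not_iff_compat (IH t)).
  - intros I f IH t; simpl; split; intros H i; apply IH; auto.
  - intros psi IH t; rewrite DK_exists_from_state; red in IH.
    setoid_rewrite IH; reflexivity.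
  - intros phi' IH pi; cbn [dsat_p sat_p Etr_p]; rewrite DK_lift_path_start; apply IH.
  - intros psi IH pi; exact (not_iff_compat (IH pi)).
  - intros I f IH pi; simpl; split; intros H i; apply IH; auto.
  - intros a IHa b IHb; exact (Etr_until_correct a b IHa IHb).
Qed.

End TranslationE.

Theorem theorem8p5 (AP : Type) (K : kripke AP) (s : St K) :
  (forall phi : sform AP,
      sat_s K phi s <-> dsat_s (DK K) (Dtr_s phi) (Some s : St (DK K))) /\
  (forall phi : dsform (option AP),
      dsat_s (DK K) phi (Some s : St (DK K)) <-> sat_s K (Etr_s K phi) s).
Proof.
  split.
  - intro phi; exact (proj1 (Dtr_correct K phi) s).
  - intro phi; exact (Etr_correct K phi s).
Qed.
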